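(* Let $(H,+,\circ)$ be a commutative multiplicative hyperring with identity and let $P$ be a strong $\mathcal{C}$-hyperideal of $H$. Then: (i) if $K\subseteq H$ is a multiplicative hyperring (under the restricted operations) and $P$ is an sdf-absorbing hyperideal of $H$, then $P\cap K$ is an sdf-absorbing hyperideal of $K$; (ii) if $Q$ is a hyperideal of $H$ with $Q\subseteq P$ and $P$ is an sdf-absorbing hyperideal of $H$, then $P/Q$ is an sdf-absorbing hyperideal of $H/Q$; (iii) if $Q$ is a hyperideal of $H$ with $Q\subsetneq P$, then $P$ is an sdf-absorbing hyperideal of $H$ if and only if $P/Q$ is an sdf-absorbing hyperideal of $H/Q$.
   Context: A commutative multiplicative hyperring $(H,+,\circ)$ consists of an abelian group $(H,+)$ and an associative, commutative hyperoperation $\circ: H\times H\to P^*(H)$ with $x\circ(y+z)\subseteq x\circ y+x\circ z$ and $x\circ(-y)=-(x\circ y)=(-x)\circ y$. For subsets $A,B$, $A\circ B=\bigcup_{a\in A,b\in B}a\circ b$, $A\pm B=\{a\pm b\}$; $x^2=x\circ x$. Identity: $x\in x\circ 1$ for all $x$. A hyperideal is a nonempty $P$ with $x-y\in P$ and $r\circ x\subseteq P$ for $x,y\in P$, $r\in H$. For a hyperideal $Q$, $H/Q=\{x+Q\}$ with coset addition and $(x+Q)*(y+Q)=\{z+Q: z\in x\circ y\}$, and $P/Q=\{x+Q: x\in P\}$. Let $\mathcal{C}=\{c_1\circ\cdots\circ c_n: c_i\in H\}$ and $\mathfrak{C}=\{\sum_{i=1}^m C_i: C_i\in\mathcal{C}\}$;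 $P$ is a strong $\mathcal{C}$-hyperideal if for every $D\in\mathfrak{C}$, $D\cap P\neq\varnothing$ implies $D\subseteq P$. A proper hyperideal $P$ is sdf-absorbing if whenever $0\neq x,y$ and $x^2-y^2\subseteq P$, then $x-y\in P$ or $x+y\in P$. *)

(* Hyperrings are encoded as records with raw operations;
   the hyperoperation is a ternary relation: [hmul x y z] means z \in x o y. *)
From Stdlib Require Import List ClassicalEpsilon.
Import ListNotations.

Set Implicit Arguments.

Record hr := HR {
  car :> Type;
  hzero : car;
  hadd : car -> car -> car;
  hopp : car -> car;
  hmul : car -> car -> car -> Prop }.

Arguments hzero {h}.
Arguments hadd {h}.
Arguments hopp {h}.
Arguments hmul {h}.

Section Gen.
Variable R : hr.

Definition hsub (x y : R) : R := hadd x (hopp y).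

Definition is_cmhr : Prop :=
  (forall x y z : R, hadd x (hadd y z) = hadd (hadd x y) z) /\
  (forall x y : R, hadd x y = hadd y x) /\
  (forall x : R, hadd x hzero = x) /\
  (forall x : R, hadd x (hopp x) = hzero) /\
  (forall x y : R, exists z, hmul x y z) /\
  (* associativity: x o (y o z) = (x o y) o z *)
  (forall x y z w : R,
     (exists u, hmul y z u /\ hmul x u w) <-> (exists u, hmul x y u /\ hmul u z w)) /\
  (forall x y z : R, hmul x y z <-> hmul y x z) /\
  (* x o (y + z) \subseteq x o y + x o z *)
  (forall x y z w : R, hmul x (hadd y z) w ->
     exists a b, hmul x y a /\ hmul x z b /\ w = hadd a b) /\
  (forall x y w : R, hmul x (hopp y) w <-> hmul x y (hopp w)) /\
  (forall x y w : R, hmul (hopp x) y w <-> hmul x y (hopp w)).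

Definition hyperideal (P : R -> Prop) : Prop :=
  (exists x, P x) /\
  (forall x y, P x -> P y -> P (hsub x y)) /\
  (forall r x z, P x -> hmul r x z -> P z).

Definition proper (P : R -> Prop) : Prop := exists x, ~ P x.

Definition sdf_absorbing (P : R -> Prop) : Prop :=
  hyperideal P /\ proper P /\
  (forall x y : R, x <> hzero -> y <> hzero ->
     (forall a b, hmul x x a -> hmul y y b -> P (hsub a b)) ->
     P (hsub x y) \/ P (hadd x y)).

(* c o d_1 o ... o d_n  (all finite hyperproducts c_1 o ... o c_n, n >= 1) *)
Fixpoint hprod (c : R) (s : list R) : R -> Prop :=
  match s with
  | [] => fun z => z = c
  | d :: s' => fun w => exists u, hprod c s' u /\ hmul u d w
  end.

(* finite sums C_1 + ... + C_m (m >= 1) of elements of the family \mathcal{C} *)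
Fixpoint sumC (p : R * list R) (l : list (R * list R)) : R -> Prop :=
  match l with
  | [] => hprod (fst p) (snd p)
  | q :: l' => fun z => exists a b,
      hprod (fst p) (snd p) a /\ sumC q l' b /\ z = hadd a b
  end.

Definition strongC_hyperideal (P : R -> Prop) : Prop :=
  hyperideal P /\
  forall p l, (exists z, sumC p l z /\ P z) -> forall z, sumC p l z -> P z.

End Gen.
Arguments hsub {R}.
Arguments hyperideal {R}.
Arguments proper {R}.
Arguments sdf_absorbing {R}.
Arguments strongC_hyperideal {R}.
Arguments hprod {R}.
Arguments sumC {R}.
Arguments is_cmhr : clear implicits.

Definition subHR {H : hr} (K : H -> Prop) (K0 : K hzero)
  (Kadd : forall x y, K x -> K y -> K (hadd x y))
  (Kopp : forall x, K x -> K (hopp x)) : hr :=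
  @HR {x : H | K x}
    (exist _ hzero K0)
    (fun x y => exist _ (hadd (proj1_sig x) (proj1_sig y))
                        (Kadd _ _ (proj2_sig x) (proj2_sig y)))
    (fun x => exist _ (hopp (proj1_sig x)) (Kopp _ (proj2_sig x)))
    (fun x y z => hmul (proj1_sig x) (proj1_sig y) (proj1_sig z)).

(* The quotient H/Q: elements are the cosets x + Q *)
Definition coset {H : hr} (Q : H -> Prop) (x : H) : H -> Prop :=
  fun z => Q (hsub z x).

Definition qcar {H : hr} (Q : H -> Prop) : Type :=
  {S : H -> Prop | exists x, S = coset Q x}.

Definition mkcoset {H : hr} (Q : H -> Prop) (x : H) : qcar Q :=
  exist _ (coset Q x) (ex_intro _ x eq_refl).

Definition crep {H : hr} (Q : H -> Prop) (S : qcar Q) : H :=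
  proj1_sig (constructive_indefinite_description _ (proj2_sig S)).

Definition quotHR {H : hr} (Q : H -> Prop) : hr :=
  @HR (qcar Q)
    (mkcoset Q hzero)
    (fun S T => mkcoset Q (hadd (crep S) (crep T)))
    (fun S => mkcoset Q (hopp (crep S)))
    (* (x+Q) * (y+Q) = { z + Q : z \in x o y } *)
    (fun S T W => exists z, hmul (crep S) (crep T) z /\ proj1_sig W = coset Q z).

Definition quotP {H : hr} (Q P : H -> Prop) : quotHR Q -> Prop :=
  fun S => exists x, P x /\ proj1_sig S = coset Q x.

Arguments quotP {H} Q P _.
Arguments quotHR {H} Q.
Arguments mkcoset {H} Q x.
Arguments crep {H} Q S.
Arguments coset {H} Q x _.

From Stdlib Require Import FunctionalExtensionality PropExtensionality ProofIrrelevance Classical ClassicalEpsilon.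

Set Implicit Arguments.

(* Everything about H/Q reduces to representatives: x + Q is nonzero iff x is
   not in Q, and (x + Q)^2 - (y + Q)^2 lies in P/Q iff x^2 - y^2 lies in P.
   Hence P/Q is sdf-absorbing iff P is proper and absorbs x^2 - y^2 for all
   x, y outside Q.  To go back to P one must also treat x in Q or y in Q: for
   i in P \ Q, applying the condition to u + i and i shows that u^2 in P
   forces u in P, so then x and y both lie in P. *)

Definition sq_diff_in {R : hr} (P : R -> Prop) (x y : R) : Prop :=
  forall a b, hmul x x a -> hmul y y b -> P (hsub a b).

Definition sdf_absorbing_outside {R : hr} (Q P : R -> Prop) : Prop :=
  forall x y : R, ~ Q x -> ~ Q y -> sq_diff_in P x y -> P (hsub x y) \/ P (hadd x y).

Definition cong {R : hr} (I : R -> Prop) (a b : R) : Prop := I (hsub a b).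

Section Hyperring.

Variable H : hr.
Hypothesis hH : is_cmhr H.

Lemma addrA (x y z : H) : hadd x (hadd y z) = hadd (hadd x y) z.
Proof. destruct hH as (addA & _). apply addA. Qed.

Lemma addrC (x y : H) : hadd x y = hadd y x.
Proof. destruct hH as (_ & addC & _). apply addC. Qed.

Lemma addr0 (x : H) : hadd x hzero = x.
Proof. destruct hH as (_ & _ & add0 & _). apply add0. Qed.

Lemma addrN (x : H) : hadd x (hopp x) = hzero.
Proof. destruct hH as (_ & _ & _ & addN & _). apply addN. Qed.

Lemma mul_nonempty (x y : H) : exists z, hmul x y z.
Proof. destruct hH as (_ & _ & _ & _ & mulN & _). apply mulN. Qed.

Lemma mulC (x y z : H) : hmul x y z <-> hmul y x z.
Proof. destruct hH as (_ & _ & _ & _ & _ & _ & mulC & _). apply mulC. Qed.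

Lemma mulrD_sub {x y z w : H} :
  hmul x (hadd y z) w -> exists a b, hmul x y a /\ hmul x z b /\ w = hadd a b.
Proof. destruct hH as (_ & _ & _ & _ & _ & _ & _ & mulD & _). apply mulD. Qed.

Lemma add0r (x : H) : hadd hzero x = x.
Proof. rewrite addrC. apply addr0. Qed.

Lemma addNr (x : H) : hadd (hopp x) x = hzero.
Proof. rewrite addrC. apply addrN. Qed.

Lemma addrACA (a b c d : H) : hadd (hadd a b) (hadd c d) = hadd (hadd a c) (hadd b d).
Proof. rewrite <- !addrA. f_equal. rewrite !addrA. f_equal. apply addrC. Qed.

Lemma opp_unique (x y : H) : hadd x y = hzero -> hopp x = y.
Proof. intros E. rewrite <- (addr0 (hopp x)), <- E, addrA, addNr. apply add0r. Qed.

Lemma opprK (x : H) : hopp (hopp x) = x.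
Proof. apply opp_unique, addNr. Qed.

Lemma oppr0 : hopp (@hzero H) = hzero.
Proof. apply opp_unique, addr0. Qed.

Lemma opprD (x y : H) : hopp (hadd x y) = hadd (hopp x) (hopp y).
Proof. apply opp_unique. rewrite addrACA, !addrN. apply addr0. Qed.

Lemma opprB (x y : H) : hopp (hsub x y) = hsub y x.
Proof. unfold hsub. rewrite opprD, opprK. apply addrC. Qed.

Lemma subrr (x : H) : hsub x x = hzero.
Proof. apply addrN. Qed.

Lemma subr0 (x : H) : hsub x hzero = x.
Proof. unfold hsub. rewrite oppr0. apply addr0. Qed.

Lemma addrK (x y : H) : hsub (hadd x y) y = x.
Proof. unfold hsub. rewrite <- addrA, addrN. apply addr0. Qed.

Lemma subrK (x y : H) : hadd y (hsub x y) = x.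
Proof. unfold hsub. rewrite (addrC x), addrA, addrN. apply add0r. Qed.

Lemma subKr (x y : H) : hsub x (hsub x y) = y.
Proof. unfold hsub. rewrite opprD, opprK, addrA, addrN. apply add0r. Qed.

Lemma subr_trans (a b c : H) : hadd (hsub a b) (hsub b c) = hsub a c.
Proof. unfold hsub. rewrite <- addrA, (addrA (hopp b)), addNr, add0r. reflexivity. Qed.

Lemma subrACA (a a' b b' : H) :
  hsub (hadd a b) (hadd a' b') = hadd (hsub a a') (hsub b b').
Proof. unfold hsub. rewrite opprD. apply addrACA. Qed.

Section Hyperideal.

Variable I : H -> Prop.
Hypothesis hI : hyperideal I.

Lemma idealB {x y : H} : I x -> I y -> I (hsub x y).
Proof. destruct hI as (_ & hB & _). apply hB. Qed.

Lemma ideal_mull {r x z : H} : I x -> hmul r x z -> I z.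
Proof. destruct hI as (_ & _ & hM). apply hM. Qed.

Lemma ideal0 : I hzero.
Proof. destruct hI as ([x Ix] & _). rewrite <- (subrr x). exact (idealB Ix Ix). Qed.

Lemma idealN {x : H} : I x -> I (hopp x).
Proof. intros Ix. rewrite <- add0r. exact (idealB ideal0 Ix). Qed.

Lemma idealD {x y : H} : I x -> I y -> I (hadd x y).
Proof. intros Ix Iy. rewrite <- (opprK y). exact (idealB Ix (idealN Iy)). Qed.

Lemma cong_refl (a : H) : cong I a a.
Proof. unfold cong. rewrite subrr. exact ideal0. Qed.

Lemma cong_sym {a b : H} : cong I a b -> cong I b a.
Proof. unfold cong. rewrite <- (opprB a b). apply idealN. Qed.

Lemma cong_trans {a b c : H} : cong I a b -> cong I b c -> cong I a c.
Proof. unfold cong. rewrite <- (subr_trans a b c). apply idealD. Qed.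

Lemma congD {a a' b b' : H} : cong I a a' -> cong I b b' -> cong I (hadd a b) (hadd a' b').
Proof. unfold cong. rewrite subrACA. apply idealD. Qed.

Lemma congN {a a' : H} : cong I a a' -> cong I (hopp a) (hopp a').
Proof. unfold cong, hsub. rewrite <- opprD. apply idealN. Qed.

Lemma cong_mem {a b : H} : cong I a b -> I a -> I b.
Proof. unfold cong. intros e Ia. rewrite <- (subKr a b). exact (idealB Ia e). Qed.

Lemma cong0 (a : H) : cong I a hzero <-> I a.
Proof. unfold cong. rewrite subr0. reflexivity. Qed.

Lemma cong_addr (u : H) {p : H} : I p -> cong I (hadd u p) u.
Proof. unfold cong. rewrite addrC, addrK. trivial. Qed.

Lemma mul_cong_r {x s y z : H} :
  cong I s y -> hmul x s z -> exists a, hmul x y a /\ cong I z a.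
Proof.
  intros e hz. rewrite <- (subrK s y) in hz.
  destruct (mulrD_sub hz) as (a & b & ha & hb & ->).
  exists a. split; [exact ha |].
  exact (cong_addr a (ideal_mull e hb)).
Qed.

Lemma mul_cong {r x s y z : H} :
  cong I r x -> cong I s y -> hmul r s z -> exists a, hmul x y a /\ cong I z a.
Proof.
  intros er es hz.
  destruct (mul_cong_r es hz) as (a1 & ha1 & e1). apply mulC in ha1.
  destruct (mul_cong_r er ha1) as (a & ha & e2). apply mulC in ha.
  exists a. split; [exact ha | exact (cong_trans e1 e2)].
Qed.

Lemma sq_diff_in_sym {x y : H} : sq_diff_in I x y -> sq_diff_in I y x.
Proof. intros hxy b a hb ha. exact (cong_sym (hxy a b ha hb)). Qed.

Lemma sq_mem_of_sq_diff_in {x y : H} :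
  I x -> sq_diff_in I x y -> forall b, hmul y y b -> I b.
Proof.
  intros Ix hxy b hb. destruct (mul_nonempty x x) as [a ha].
  exact (cong_mem (hxy a b ha hb) (ideal_mull Ix ha)).
Qed.

End Hyperideal.

Section Quotient.

Variable Q : H -> Prop.
Hypothesis hQ : hyperideal Q.

Lemma coset_crep (S : quotHR Q) : proj1_sig S = coset Q (crep Q S).
Proof. unfold crep. destruct (constructive_indefinite_description _ _) as [r Er]. exact Er. Qed.

Lemma coset_eq (a b : H) : coset Q a = coset Q b <-> cong Q a b.
Proof.
  split.
  - intros E. change (coset Q b a). rewrite <- E. exact (cong_refl hQ a).
  - intros e. apply functional_extensionality; intros z.
    apply propositional_extensionality. split; intros h.
    + exact (cong_trans hQ h e).
    + exact (cong_trans hQ h (cong_sym hQ e)).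
Qed.

Lemma quot_ext (S T : quotHR Q) : proj1_sig S = proj1_sig T -> S = T.
Proof. destruct S as [S hS], T as [T hT]. apply subset_eq_compat. Qed.

Lemma mkcoset_eq (a b : H) : mkcoset Q a = mkcoset Q b <-> cong Q a b.
Proof.
  rewrite <- coset_eq. split; intros E.
  - exact (f_equal (@proj1_sig _ _) E).
  - exact (quot_ext (mkcoset Q a) (mkcoset Q b) E).
Qed.

Lemma mkcoset_crep (S : quotHR Q) : mkcoset Q (crep Q S) = S.
Proof. apply quot_ext. symmetry. apply coset_crep. Qed.

Lemma mkcoset_surj (S : quotHR Q) : exists a, S = mkcoset Q a.
Proof. exists (crep Q S). symmetry. apply mkcoset_crep. Qed.

Lemma crep_mkcoset (a : H) : cong Q (crep Q (mkcoset Q a)) a.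
Proof. apply mkcoset_eq, mkcoset_crep. Qed.

Lemma quot_eq0 (a : H) : (mkcoset Q a : quotHR Q) = hzero <-> Q a.
Proof. change (mkcoset Q a = mkcoset Q hzero <-> Q a). rewrite mkcoset_eq. apply cong0. Qed.

Lemma quot_addE (a b : H) :
  @hadd (quotHR Q) (mkcoset Q a) (mkcoset Q b) = mkcoset Q (hadd a b).
Proof. apply mkcoset_eq, congD; [exact hQ | apply crep_mkcoset | apply crep_mkcoset]. Qed.

Lemma quot_oppE (a : H) : @hopp (quotHR Q) (mkcoset Q a) = mkcoset Q (hopp a).
Proof. apply mkcoset_eq, congN; [exact hQ | apply crep_mkcoset]. Qed.

Lemma quot_subE (a b : H) :
  @hsub (quotHR Q) (mkcoset Q a) (mkcoset Q b) = mkcoset Q (hsub a b).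
Proof. unfold hsub. rewrite quot_oppE. apply quot_addE. Qed.

Lemma quot_mulE (a b : H) (W : quotHR Q) :
  @hmul (quotHR Q) (mkcoset Q a) (mkcoset Q b) W <-> exists z, hmul a b z /\ W = mkcoset Q z.
Proof.
  split.
  - intros (z & hz & E).
    destruct (mul_cong hQ (crep_mkcoset a) (crep_mkcoset b) hz) as (z' & hz' & e).
    exists z'. split; [exact hz' |].
    apply quot_ext. rewrite E. apply coset_eq, e.
  - intros (z & hz & ->).
    destruct (mul_cong hQ (cong_sym hQ (crep_mkcoset a)) (cong_sym hQ (crep_mkcoset b)) hz)
      as (z' & hz' & e).
    exists z'. split; [exact hz' | apply coset_eq, e].
Qed.

Variable P : H -> Prop.
Hypothesis hP : hyperideal P.
Hypothesis QP : forall x, Q x -> P x.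

Lemma quotP_mkcoset (a : H) : quotP Q P (mkcoset Q a) <-> P a.
Proof.
  split.
  - intros (x & Px & E). apply coset_eq in E.
    exact (cong_mem hP (cong_sym hP (QP E)) Px).
  - intros Pa. exists a. split; [exact Pa | reflexivity].
Qed.

Lemma hyperideal_quotP : hyperideal (quotP Q P).
Proof.
  split; [| split].
  - exists (mkcoset Q hzero). apply quotP_mkcoset, ideal0, hP.
  - intros S T. destruct (mkcoset_surj S) as [a ->], (mkcoset_surj T) as [b ->].
    rewrite quot_subE, !quotP_mkcoset. apply idealB, hP.
  - intros R S W. destruct (mkcoset_surj R) as [r ->], (mkcoset_surj S) as [x ->].
    rewrite quot_mulE, quotP_mkcoset. intros Px (z & hz & ->).
    apply quotP_mkcoset. exact (ideal_mull hP Px hz).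
Qed.

Lemma proper_quotP : proper (quotP Q P) <-> proper P.
Proof.
  split; intros [S nS].
  - destruct (mkcoset_surj S) as [a ->]. exists a. rewrite <- quotP_mkcoset. exact nS.
  - exists (mkcoset Q S). rewrite quotP_mkcoset. exact nS.
Qed.

Lemma sq_diff_in_quotP (x y : H) :
  sq_diff_in (quotP Q P) (mkcoset Q x) (mkcoset Q y) <-> sq_diff_in P x y.
Proof.
  split.
  - intros hXY a b ha hb. apply quotP_mkcoset. rewrite <- quot_subE.
    apply hXY; apply quot_mulE; eauto.
  - intros hxy A B hA hB.
    apply quot_mulE in hA as (a & ha & ->). apply quot_mulE in hB as (b & hb & ->).
    rewrite quot_subE, quotP_mkcoset. exact (hxy a b ha hb).
Qed.

Lemma sdf_absorbing_quotP_iff :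
  sdf_absorbing (quotP Q P) <-> proper P /\ sdf_absorbing_outside Q P.
Proof.
  split.
  - intros (_ & pr & sd). split; [apply proper_quotP, pr |].
    intros x y nx ny hxy.
    rewrite <- !quotP_mkcoset, <- quot_subE, <- quot_addE.
    apply sd; [rewrite quot_eq0; exact nx | rewrite quot_eq0; exact ny |].
    apply sq_diff_in_quotP, hxy.
  - intros [pr sd]. split; [exact hyperideal_quotP | split; [apply proper_quotP, pr |]].
    intros X Y. destruct (mkcoset_surj X) as [x ->], (mkcoset_surj Y) as [y ->].
    intros nx ny hXY. rewrite quot_subE, quot_addE, !quotP_mkcoset.
    apply sd; [rewrite <- quot_eq0; exact nx | rewrite <- quot_eq0; exact ny |].
    exact (proj1 (sq_diff_in_quotP x y) hXY).
Qed.

End Quotient.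

Section Outside.

Variables Q P : H -> Prop.
Hypothesis hQ : hyperideal Q.
Hypothesis hP : hyperideal P.
Hypothesis QP : forall x, Q x -> P x.

Lemma sdf_absorbing_outside_of_sdf : sdf_absorbing P -> sdf_absorbing_outside Q P.
Proof.
  intros (_ & _ & sd) x y nx ny. apply sd.
  - intros ->. exact (nx (ideal0 hQ)).
  - intros ->. exact (ny (ideal0 hQ)).
Qed.

Lemma sdf_absorbing_quotP : sdf_absorbing P -> sdf_absorbing (quotP Q P).
Proof.
  intros hsdf. apply (sdf_absorbing_quotP_iff hQ hP QP).
  split; [apply hsdf | exact (sdf_absorbing_outside_of_sdf hsdf)].
Qed.

Lemma sq_closed_of_outside (i : H) : P i -> ~ Q i -> sdf_absorbing_outside Q P ->
  forall u, (forall c, hmul u u c -> P c) -> P u.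
Proof.
  intros Pi nQi sd u hu.
  assert (eu : cong P (hadd u i) u) by exact (cong_addr P u Pi).
  destruct (classic (Q (hadd u i))) as [q | nq].
  { exact (cong_mem hP eu (QP q)). }
  destruct (sd (hadd u i) i nq nQi) as [h | h].
  - intros a b ha hb. apply (idealB hP).
    + destruct (mul_cong hP eu eu ha) as (a' & ha' & e).
      exact (cong_mem hP (cong_sym hP e) (hu a' ha')).
    + exact (ideal_mull hP Pi hb).
  - rewrite addrK in h. exact h.
  - exact (cong_mem hP (cong_trans hP (cong_addr P _ Pi) eu) h).
Qed.

Lemma sdf_absorbing_of_outside : (exists i, P i /\ ~ Q i) -> proper P ->
  sdf_absorbing_outside Q P -> sdf_absorbing P.
Proof.
  intros (i & Pi & nQi) pr sd. split; [exact hP | split; [exact pr |]].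
  intros x y _ _ hxy.
  pose proof (sq_closed_of_outside Pi nQi sd) as sq_closed.
  destruct (classic (Q x)) as [qx | nqx].
  { left. apply (idealB hP); [exact (QP qx) |].
    exact (sq_closed y (sq_mem_of_sq_diff_in hP (QP qx) hxy)). }
  destruct (classic (Q y)) as [qy | nqy].
  { left. apply (idealB hP); [| exact (QP qy)].
    exact (sq_closed x (sq_mem_of_sq_diff_in hP (QP qy) (sq_diff_in_sym hP hxy))). }
  exact (sd x y nqx nqy hxy).
Qed.

End Outside.

Lemma sdf_absorbing_subHR (P K : H -> Prop) (K0 : K hzero)
  (Kadd : forall x y, K x -> K y -> K (hadd x y))
  (Kopp : forall x, K x -> K (hopp x))
  (Kmul : forall x y z, K x -> K y -> hmul x y z -> K z) :
  ~ (forall x, K x -> P x) -> sdf_absorbing P ->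
  @sdf_absorbing (subHR K K0 Kadd Kopp) (fun x => P (proj1_sig x)).
Proof.
  intros nKP (hP & _ & sd). split; [split; [| split] | split].
  - exists (exist K hzero K0). exact (ideal0 hP).
  - intros [x kx] [y ky] Px Py. exact (idealB hP Px Py).
  - intros [r kr] [x kx] [z kz] Px hz. exact (ideal_mull hP Px hz).
  - destruct (not_all_ex_not _ _ nKP) as [x hx].
    apply imply_to_and in hx as [kx nPx]. exists (exist K x kx). exact nPx.
  - intros [x kx] [y ky] nx ny hxy. apply sd.
    + intros E. apply nx, subset_eq_compat, E.
    + intros E. apply ny, subset_eq_compat, E.
    + intros a b ha hb.
      exact (hxy (exist K a (Kmul x x a kx kx ha)) (exist K b (Kmul y y b ky ky hb)) ha hb).
Qed.

End Hyperring.

Theorem mainTheorem10 (H : hr) (one : H)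
  (hH : is_cmhr H) (hone : forall x : H, hmul x one x)
  (P : H -> Prop) (hP : strongC_hyperideal P) :
  (* (i) *)
  (forall (K : H -> Prop) (K0 : K hzero)
     (Kadd : forall x y, K x -> K y -> K (hadd x y))
     (Kopp : forall x, K x -> K (hopp x))
     (Kmul : forall x y z, K x -> K y -> hmul x y z -> K z),
     ~ (forall x, K x -> P x) ->
     sdf_absorbing P ->
     @sdf_absorbing (subHR K K0 Kadd Kopp) (fun x => P (proj1_sig x)))
  /\
  (* (ii) *)
  (forall Q : H -> Prop, hyperideal Q -> (forall x, Q x -> P x) ->
     sdf_absorbing P -> sdf_absorbing (quotP Q P))
  /\
  (* (iii) *)
  (forall Q : H -> Prop, hyperideal Q -> (forall x, Q x -> P x) ->
     (exists x, P x /\ ~ Q x) ->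
     (sdf_absorbing P <-> sdf_absorbing (quotP Q P))).
Proof.
  destruct hP as [hPi _]. split; [| split].
  - intros K K0 Kadd Kopp Kmul. exact (sdf_absorbing_subHR hH K K0 Kadd Kopp Kmul).
  - intros Q hQ QP. exact (sdf_absorbing_quotP hH hQ hPi QP).
  - intros Q hQ QP Pi. split; [exact (sdf_absorbing_quotP hH hQ hPi QP) |].
    rewrite (sdf_absorbing_quotP_iff hH hQ hPi QP). intros [pr sd].
    exact (sdf_absorbing_of_outside hH hPi QP Pi pr sd).
Qed.
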